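(* Let $(G,+,\bullet)$ be an interchange near ring. Then $(G,\bullet)$ is associative if and only if for every $x\in G$ the following three identities hold: (i) $(x\bullet 0)\bullet 0 = x\bullet 0$; (ii) $(0\bullet x)\bullet 0 = 0\bullet (x\bullet 0)$; (iii) $0\bullet(0\bullet x) = 0\bullet x$.
   Context: An interchange near ring is a triple $(G,+,\bullet)$ where $(G,+)$ is a group (written additively, not necessarily abelian, with identity $0$ and inverses $-x$) and $\bullet$ is a binary operation on $G$ satisfying the interchange law $(w+x)\bullet(y+z) = (w\bullet y)+(x\bullet z)$ for all $w,x,y,z\in G$. No other axioms are imposed on $\bullet$. *)

Definition is_group (G : Type) (add : G -> G -> G) (zero : G) (opp : G -> G) : Prop :=
  (forall x y z, add x (add y z) = add (add x y) z) /\
  (forall x, add zero x = x) /\ (forall x, add x zero = x) /\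
  (forall x, add (opp x) x = zero) /\ (forall x, add x (opp x) = zero).

Definition interchange (G : Type) (add mul : G -> G -> G) : Prop :=
  forall w x y z, mul (add w x) (add y z) = add (mul w y) (mul x z).

Definition is_interchange_near_ring (G : Type) (add : G -> G -> G) (zero : G)
  (opp : G -> G) (mul : G -> G -> G) : Prop :=
  is_group G add zero opp /\ interchange G add mul.

Definition associative_op (G : Type) (mul : G -> G -> G) : Prop :=
  forall x y z, mul x (mul y z) = mul (mul x y) z.


(* The interchange law with one argument
   split as z + 0 or 0 + z gives the decomposition  x • y = (x • 0) + (0 • y),
   and with 0 = 0 + 0 it shows that  _ • 0  and  0 • _  are additive.
   Hence both sides of  x • (y • z) = (x • y) • z  expand to sums of the form
   (x • 0) • 0 + (0 • y) • 0 + 0 • (0 • z)  versus  x • 0 + 0 • (y • 0) + 0 • z,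
   which agree term by term exactly under (i)-(iii).  Conversely, 0 • 0 is an
   idempotent of the group, so 0 • 0 = 0, and (i)-(iii) are instances of
   associativity with 0 • 0 simplified to 0.
   The file first develops these facts for a fixed interchange near ring in a
   section, each under the group axioms it actually uses, then derives the two
   directions, and finally the theorem. *)

Section InterchangeNearRing.

Variable G : Type.
Variables (add mul : G -> G -> G) (zero : G) (opp : G -> G).

Hypothesis add_assoc : forall x y z, add x (add y z) = add (add x y) z.
Hypothesis add_0l : forall x, add zero x = x.
Hypothesis add_0r : forall x, add x zero = x.
Hypothesis add_oppl : forall x, add (opp x) x = zero.
Hypothesis interchange_law : interchange G add mul.

Lemma idempotent_is_zero (a : G) : add a a = a -> a = zero.
Proof.
  intros Haa.
  (* a = (-a + a) + a = -a + (a + a) = -a + a = 0 *)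
  transitivity (add (add (opp a) a) a).
  - rewrite add_oppl, add_0l; reflexivity.
  - rewrite <- add_assoc, Haa; apply add_oppl.
Qed.

(* 0 • 0 = 0, since (0 + 0) • (0 + 0) = 0 • 0 + 0 • 0 makes it idempotent. *)
Lemma mul_zero_zero : mul zero zero = zero.
Proof.
  apply idempotent_is_zero.
  rewrite <- interchange_law, add_0l.
  reflexivity.
Qed.

(* Every product splits as x • y = (x • 0) + (0 • y), by x • y = (x + 0) • (0 + y). *)
Lemma mul_decompose (x y : G) : mul x y = add (mul x zero) (mul zero y).
Proof.
  rewrite <- interchange_law, add_0r, add_0l.
  reflexivity.
Qed.

(* Right multiplication by 0 is additive: (a + b) • (0 + 0) = a • 0 + b • 0. *)
Lemma mulr_zero_additive (a b : G) :
  mul (add a b) zero = add (mul a zero) (mul b zero).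
Proof.
  rewrite <- interchange_law, add_0l.
  reflexivity.
Qed.

(* Left multiplication by 0 is additive: (0 + 0) • (a + b) = 0 • a + 0 • b. *)
Lemma mull_zero_additive (a b : G) :
  mul zero (add a b) = add (mul zero a) (mul zero b).
Proof.
  rewrite <- interchange_law, add_0l.
  reflexivity.
Qed.

Lemma zero_identities_of_assoc :
  associative_op G mul ->
  forall x : G,
    mul (mul x zero) zero = mul x zero /\
    mul (mul zero x) zero = mul zero (mul x zero) /\
    mul zero (mul zero x) = mul zero x.
Proof.
  intros Hassoc x.
  split; [| split].
  - rewrite <- Hassoc, mul_zero_zero; reflexivity.
  - symmetry; apply Hassoc.
  - rewrite Hassoc, mul_zero_zero; reflexivity.
Qed.

Lemma assoc_of_zero_identities :
  (forall x : G,
    mul (mul x zero) zero = mul x zero /\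
    mul (mul zero x) zero = mul zero (mul x zero) /\
    mul zero (mul zero x) = mul zero x) ->
  associative_op G mul.
Proof.
  intros Hzero x y z.
  destruct (Hzero x) as [Hx _].
  destruct (Hzero y) as [_ [Hy _]].
  destruct (Hzero z) as [_ [_ Hz]].
  rewrite (mul_decompose y z), (mul_decompose x (add _ _)), mull_zero_additive.
  rewrite (mul_decompose x y), (mul_decompose (add _ _) z), mulr_zero_additive.
  rewrite Hx, Hy, Hz, add_assoc.
  reflexivity.
Qed.

End InterchangeNearRing.

Theorem lemma2p2 (G : Type) (add : G -> G -> G) (zero : G) (opp : G -> G)
  (mul : G -> G -> G) :
  is_interchange_near_ring G add zero opp mul ->
  (associative_op G mul <->
   (forall x : G,
      mul (mul x zero) zero = mul x zero /\
      mul (mul zero x) zero = mul zero (mul x zero) /\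
      mul zero (mul zero x) = mul zero x)).
Proof.
  intros [[add_assoc [add_0l [add_0r [add_oppl _]]]] interchange_law].
  split.
  - exact (zero_identities_of_assoc G add mul zero opp
             add_assoc add_0l add_oppl interchange_law).
  - exact (assoc_of_zero_identities G add mul zero add_assoc add_0l add_0r
             interchange_law).
Qed.
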